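(* Let $\mathfrak g$ be a Kac–Moody algebra with Dynkin diagram $\Gamma$ and Weyl group $W$, and let $(u,v)\in W\times W$. Then the Berenstein–Fomin–Zelevinsky quiver $Q^{u,v}$, drawn on the cylinder $\Gamma\times\mathbb{R}$ in the standard way, is planar in each sheet: within any sheet, no two arrows of $Q^{u,v}$ cross.
   Context: Let $\Gamma$ have vertex set $[1,r]$ and generalized Cartan matrix $(a_{ij})$; vertices $i\neq j$ are adjacent in $\Gamma$ iff $a_{ij}<0$. $W$ is generated by the simple reflections $s_1,\dots,s_r$. BFZ quiver. Write a reduced word for $u$ using the negative indices $-1,\dots,-r$ (the letter $-j$ standing for $s_j$) and a reduced word for $v$ using positive indices, and let $\mathbf i=(i_1,\dots,i_m)$, $m=\ell(u)+\ell(v)$, be any shuffle of the two. Put $i_{-j}=-j$ for $j\in[1,r]$. For $k\in[-r,-1]\cup[1,m]$ let $k^+$ be the smallest $l>k$ with $|i_l|=|i_k|$, or $k^+=m+1$ if there is none. Let $\varepsilon(i)\in\{\pm1\}$ be the sign of $i$. An index $k$ is $\mathbf i$-exchangeable if both $k,k^+\in[-r,-1]\cup[1,m]$. The quiver $Q^{u,v}$ has vertex set $[-r,-1]\cup[1,m]$; for $k<l$ there is an arrow between $k$ and $l$ iff at least one of $k,l$ is exchangeable and one of: (horizontal) $l=k^+$, directed $k\to l$ iff $\varepsilon(i_l)=+1$; (inclined) $|i_k|,|i_l|$ adjacent in $\Gamma$ and either $l<k^+<l^+$ with $\varepsilon(i_l)=\varepsilon(i_{k^+})$, or $l<l^+<k^+$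 with $\varepsilon(i_l)=-\varepsilon(i_{l^+})$; an inclined arrow is directed $k\to l$ iff $\varepsilon(i_l)=-1$. Cylinder. The cylinder over $\Gamma$ (as a topological graph) is $\Gamma\times\mathbb{R}$; $\{x\}\times\mathbb{R}$ for a vertex $x$ is a string. An endpoint of $\Gamma$ is a vertex with one incident edge, a branching point one with more than two; a branch $\Gamma_{m,n}$ is a path between two vertices each of which is an endpoint or branching point, and $\Gamma_{m,n}\times\mathbb{R}$ is the sheet over it. The standard drawing places vertex $k$ of $Q^{u,v}$ at the point $(|i_k|,k)$ on the string over $|i_k|$ and draws arrows as straight segments (horizontal arrows on strings, inclined arrows between adjacent strings). *)

From HB Require Import structures.
From mathcomp Require Import all_boot all_order all_algebra.
Set Implicit Arguments. Unset Strict Implicit. Unset Printing Implicit Defensive.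
Import Order.TTheory GRing.Theory Num.Theory.
Local Open Scope ring_scope.

(* Vertex labels of Gamma are the natural numbers 1..r, as in the paper. *)
Definition in_range (r p : nat) : bool := (1 <= p <= r)%N.

Definition GCM (r : nat) (a : nat -> nat -> int) : Prop :=
  forall i j, in_range r i -> in_range r j ->
    [/\ a i i = 2, (i != j -> a i j <= 0) & (a i j = 0 <-> a j i = 0)].

Definition adjG (a : nat -> nat -> int) (p q : nat) : bool := (p != q) && (a p q < 0).

(* ---- Weyl group W, acting on the root lattice (coordinates w.r.t. the
   simple roots alpha_1..alpha_r): s_i(alpha_j) = alpha_j - a_ij alpha_i. *)
Definition sref (r : nat) (a : nat -> nat -> int) (i : nat) (x : nat -> int)
  : nat -> int :=
  fun j => if j == i then x j - \sum_(1 <= k < r.+1) x k * a i k else x j.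

Definition wact (r : nat) (a : nat -> nat -> int) (w : seq nat) (x : nat -> int) :=
  foldr (sref r a) x w.

Definition sroot (j : nat) : nat -> int := fun k => if k == j then 1 else 0.

Definition weyl_eq (r : nat) (a : nat -> nat -> int) (w w' : seq nat) : Prop :=
  forall j k, in_range r j -> in_range r k ->
    wact r a w (sroot j) k = wact r a w' (sroot j) k.

Definition reduced_word (r : nat) (a : nat -> nat -> int) (w : seq nat) : Prop :=
  all (in_range r) w /\
  forall w', all (in_range r) w' -> weyl_eq r a w' w -> (size w <= size w')%N.

(* the negative letters form the word for u, the positive ones the word for v *)
Definition uword (i : seq int) : seq nat := [seq `|x|%N | x <- i & x < 0].
Definition vword (i : seq int) : seq nat := [seq `|x|%N | x <- i & 0 < x].

(* i_k, with i_{-j} = -j *)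
Definition ix (i : seq int) (k : int) : int :=
  if k < 0 then k else nth 0 i (`|k|%N.-1).

Definition isV (r : nat) (i : seq int) (k : int) : bool :=
  ((- (r%:Z) <= k) && (k <= -1)) || ((1 <= k) && (k <= (size i)%:Z)).

Definition kplus (i : seq int) (k : int) : int :=
  head ((size i).+1)%:Z
    [seq l <- [seq n%:Z | n <- iota 1 (size i)] |
       (k < l) && (`|ix i l| == `|ix i k|)%N].

Definition exch (r : nat) (i : seq int) (k : int) : bool :=
  isV r i k && isV r i (kplus i k).

Definition horiz (i : seq int) (k l : int) : bool := (k < l) && (l == kplus i k).

Definition inclined (a : nat -> nat -> int) (i : seq int) (k l : int) : bool :=
  (k < l) && adjG a `|ix i k|%N `|ix i l|%N &&
  ( ((l < kplus i k) && (kplus i k < kplus i l)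
       && ((0 < ix i l) == (0 < ix i (kplus i k))))
    || ((l < kplus i l) && (kplus i l < kplus i k)
       && ((0 < ix i l) != (0 < ix i (kplus i l))))).

Definition qedge (r : nat) (a : nat -> nat -> int) (i : seq int) (k l : int) : bool :=
  (k < l) && isV r i k && isV r i l && (exch r i k || exch r i l)
  && (horiz i k l || inclined a i k l).

(* for k < l, the arrow between k and l is directed k -> l *)
Definition dir_up (i : seq int) (k l : int) : bool :=
  if horiz i k l then 0 < ix i l else ix i l < 0.

Definition qarrow (r : nat) (a : nat -> nat -> int) (i : seq int) (k l : int) : bool :=
  (qedge r a i k l && dir_up i k l) || (qedge r a i l k && ~~ dir_up i l k).

Definition deg (r : nat) (a : nat -> nat -> int) (p : nat) : nat :=
  count (adjG a p) (iota 1 r).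

Definition special (r : nat) (a : nat -> nat -> int) (p : nat) : bool :=
  (deg r a p == 1)%N || (2 < deg r a p)%N.

Definition is_branch (r : nat) (a : nat -> nat -> int) (br : seq nat) : Prop :=
  [/\ (1 < size br)%N, uniq br, all (in_range r) br,
      (forall j, (j.+1 < size br)%N -> adjG a (nth 0%N br j) (nth 0%N br j.+1))
    & special r a (nth 0%N br 0) && special r a (last 0%N br)] /\
  (forall j, (0 < j)%N -> (j.+1 < size br)%N -> ~~ special r a (nth 0%N br j)).

(* the arrow between k and l lies in the sheet over the branch br:
   horizontal arrows on a string of br, inclined arrows over an edge of br *)
Definition in_sheet (i : seq int) (br : seq nat) (k l : int) : bool :=
  let p := `|ix i k|%N in let q := `|ix i l|%N in
  ((p == q) && (p \in br)) ||
  has (fun j => ((p == nth 0%N br j) && (q == nth 0%N br j.+1))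
             || ((q == nth 0%N br j) && (p == nth 0%N br j.+1)))
      (iota 0 (size br).-1).

(* standard drawing of the sheet over br = [p_0..p_t] in the plane:
   the string over p_j is the line x = j, vertex k sits at height k *)
Definition vpt (R : realFieldType) (i : seq int) (br : seq nat) (k : int) : R * R :=
  ((index `|ix i k|%N br)%:R, k%:~R).

Definition on_segment (R : realFieldType) (P A B : R * R) : Prop :=
  exists t : R, [/\ 0 <= t, t <= 1 &
    P = ((1 - t) * A.1 + t * B.1, (1 - t) * A.2 + t * B.2)].

(* Every arrow k < l of Q^{u,v} satisfies l <= k^+, so no vertex on the string of
   k lies strictly between the heights k and l (the gap property).  In a sheet, an arrow is either
   a vertical segment on one string or a segment across the unit strip between
   two adjacent strings.  If two arrows meet at a point of integral abscissa, then
   either one of them crosses a strip and the point is one of its ends, or both lie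
   on the same string; either way the gap property puts the point at an end of
   both.  Otherwise both cross the same strip, the gap property forces their left
   and right heights to be ordered the same way, and two such segments can only
   share an endpoint. *)

From HB Require Import structures.
From mathcomp Require Import all_boot all_order all_algebra.
From mathcomp Require Import zify ring lra.
Import Order.TTheory GRing.Theory Num.Theory.
Local Open Scope ring_scope.
Set Implicit Arguments. Unset Strict Implicit.

Section Segments.
Variable R : realFieldType.
Implicit Types (P A B : R * R).

Lemma on_segment_sym P A B : on_segment P A B -> on_segment P B A.
Proof. by case=> t [t0 t1 ->]; exists (1 - t); split; [lra|lra|congr (_, _); ring]. Qed.

Lemma on_segment_fst_bounds P A B :
  A.1 <= B.1 -> on_segment P A B -> A.1 <= P.1 <= B.1.
Proof. by move=> AB [t [t0 t1 ->]] /=; apply/andP; split; nra. Qed.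

Lemma on_segment_snd_bounds P A B :
  A.2 <= B.2 -> on_segment P A B -> A.2 <= P.2 <= B.2.
Proof. by move=> AB [t [t0 t1 ->]] /=; apply/andP; split; nra. Qed.

Lemma on_segment_fst_eq P A B : A.1 = B.1 -> on_segment P A B -> P.1 = A.1.
Proof. by move=> AB [t [_ _ ->]] /=; rewrite -AB; ring. Qed.

Lemma on_unit_segment_end P A B : B.1 = A.1 + 1 -> on_segment P A B ->
  (P.1 = A.1 -> P = A) /\ (P.1 = B.1 -> P = B).
Proof.
case: A B => [a1 a2] [b1 b2] /= AB [t [_ _ ->]] /=; rewrite AB.
split=> ht; [have -> : t = 0 by lra|have -> : t = 1 by lra]; congr (_, _); ring.
Qed.

Lemma on_unit_segment_nat P A B (c n : nat) :
  A.1 = c%:R -> B.1 = A.1 + 1 -> on_segment P A B -> P.1 = n%:R -> P = A \/ P = B.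
Proof.
move=> Ac AB s Pn; have [PA PB] := on_unit_segment_end AB s.
have AleB : A.1 <= B.1 by rewrite AB; lra.
have /andP[] := on_segment_fst_bounds AleB s.
rewrite AB Ac Pn natr1 !ler_nat => cn nc; move: Pn.
have [->|->] : n = c \/ n = c.+1 by lia.
  by move=> Pc; left; apply: PA; rewrite Pc Ac.
by move=> Pc; right; apply: PB; rewrite Pc AB Ac natr1.
Qed.

Lemma unit_strip_crossing P A B A' B' :
  A'.1 = A.1 -> B.1 = A.1 + 1 -> B'.1 = B.1 ->
  A.2 <= A'.2 -> B.2 <= B'.2 -> A.2 < A'.2 \/ B.2 < B'.2 ->
  on_segment P A B -> on_segment P A' B' -> (P = A /\ P = A') \/ (P = B /\ P = B').
Proof.
move=> e1 AB e2 hA hB hlt s s'.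
have A'B' : B'.1 = A'.1 + 1 by rewrite e2 e1.
have [PA PB] := on_unit_segment_end AB s.
have [PA' PB'] := on_unit_segment_end A'B' s'.
case: s s' => t [t0 t1 Pt] [u [u0 u1 Pu]].
have /= := congr1 fst Pt; have /= := congr1 fst Pu; have /= := congr1 snd Pt.
have /= := congr1 snd Pu; rewrite e1 e2 AB => y' y x' x.
have ut : u = t by lra.
subst u; case: hlt => hlt.
  have t1' : t = 1 by nra.
  by right; split; [apply: PB|apply: PB']; rewrite ?e2 x t1' ?AB; ring.
have t0' : t = 0 by nra.
by left; split; [apply: PA|apply: PA']; rewrite ?e1 x t0'; ring.
Qed.

End Segments.

Section Drawing.
Variables (R : realFieldType) (col : int -> nat) (V : pred int).

Definition pt (m : int) : R * R := ((col m)%:R, m%:~R).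

Definition gap (k l : int) : Prop := forall m, V m ->
  (k < m < l -> col m != col k) /\ (l < m < k -> col m != col l).

Definition gap_edge (k l : int) : Prop :=
  [/\ V k, V l, (col k <= (col l).+1)%N, (col l <= (col k).+1)%N & gap k l].

Definition at_endpoints (P : R * R) (k l k' l' : int) : Prop :=
  (P = pt k \/ P = pt l) /\ (P = pt k' \/ P = pt l').

Lemma gap_sym k l : gap k l -> gap l k.
Proof. by move=> g m /g[]. Qed.

Lemma gap_edge_sym k l : gap_edge k l -> gap_edge l k.
Proof. by case=> Vk Vl kl lk /gap_sym g; split. Qed.

Lemma gap_lower k l m : gap k l -> V m -> col m = col k -> ~~ (k < m < l).
Proof. by move=> g /g[h _] cm; apply/negP => /h; rewrite cm eqxx. Qed.

Lemma eq_pt (P : R * R) m : P.1 = (col m)%:R -> P.2 = m%:~R -> P = pt m.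
Proof. by case: P => x y /= -> ->. Qed.

Lemma pt_fst_succ k l : col l = (col k).+1 -> (pt l).1 = (pt k).1 + 1.
Proof. by rewrite /= natr1 => ->. Qed.

Lemma vertical_edge_point k l m : gap_edge k l -> col l = col k -> V m ->
  on_segment (pt m) (pt k) (pt l) -> m = k \/ m = l.
Proof.
wlog kl : k l / k <= l.
  move=> hw; have [/hw//|/ltW lk] := lerP k l.
  move=> /gap_edge_sym e /esym ekl Vm /on_segment_sym s.
  by have [|] := hw l k lk e ekl Vm s; [right|left].
case=> _ _ _ _ g ekl Vm s.
have cm : col m = col k.
  have e : (pt k).1 = (pt l).1 by rewrite /= ekl.
  by move/eqP: (on_segment_fst_eq e s); rewrite eqr_nat => /eqP.
have kl' : (pt k).2 <= (pt l).2 by rewrite /= ler_int.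
have /andP[] := on_segment_snd_bounds kl' s; rewrite /= !ler_int => km ml.
have := gap_lower g Vm cm; lia.
Qed.

Lemma vertical_edges_crossing k l k' l' P : gap_edge k l -> gap_edge k' l' ->
  col l = col k -> col l' = col k' -> ~ ((k = k' /\ l = l') \/ (k = l' /\ l = k')) ->
  on_segment P (pt k) (pt l) -> on_segment P (pt k') (pt l') -> at_endpoints P k l k' l'.
Proof.
wlog kl : k l / k <= l.
  move=> hw; have [/hw//|/ltW lk] := lerP k l.
  move=> /gap_edge_sym e e' /esym ekl ekl' ne /on_segment_sym s s'.
  have [] := hw l k lk e e' ekl ekl' _ s s'; rewrite /at_endpoints; tauto.
wlog kl' : k' l' / k' <= l'.
  move=> hw; have [/hw//|/ltW lk] := lerP k' l'.
  move=> e /gap_edge_sym e' ekl /esym ekl' ne s /on_segment_sym s'.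
  have [] := hw l' k' lk e e' ekl ekl' _ s s'; rewrite /at_endpoints; tauto.
case=> Vk Vl _ _ g; case=> Vk' Vl' _ _ g' ekl ekl' ne s s'.
have e1 : P.1 = (col k)%:R by apply: on_segment_fst_eq s; rewrite /= ekl.
have e1' : P.1 = (col k')%:R by apply: on_segment_fst_eq s'; rewrite /= ekl'.
have ekk' : col k' = col k by apply/eqP; rewrite -(eqr_nat R) -e1 -e1'.
have g1 := gap_lower g Vk' ekk'.
have g2 := gap_lower g Vl' (etrans ekl' ekk').
have g3 := gap_lower g' Vk (esym ekk').
have g4 := gap_lower g' Vl (etrans ekl (esym ekk')).
have kl_R : (pt k).2 <= (pt l).2 by rewrite /= ler_int.
have kl_R' : (pt k').2 <= (pt l').2 by rewrite /= ler_int.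
have /andP[] := on_segment_snd_bounds kl_R s; rewrite /= => h1 h2.
have /andP[] := on_segment_snd_bounds kl_R' s'; rewrite /= => h1' h2'.
have [lk'|l'k] : l <= k' \/ l' <= k by lia.
- have ek : k' = l by apply/eqP; rewrite eq_le lk' -(ler_int R) (le_trans h1' h2).
  subst k'; have P2 : P.2 = l%:~R by apply/eqP; rewrite eq_le h2 h1'.
  have -> : P = pt l by apply: (eq_pt _ P2); rewrite e1 ekl.
  by split; [right|left].
- have ek : k = l' by apply/eqP; rewrite eq_le l'k -(ler_int R) (le_trans h1 h2').
  subst l'; have P2 : P.2 = k%:~R by apply/eqP; rewrite eq_le h2' h1.
  have -> : P = pt k by apply: (eq_pt _ P2).
  by split; [left|right].
Qed.

Lemma vertical_strip_crossing k l k' l' P : gap_edge k l -> col l = col k ->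
  V k' -> V l' -> col l' = (col k').+1 ->
  on_segment P (pt k) (pt l) -> on_segment P (pt k') (pt l') -> at_endpoints P k l k' l'.
Proof.
move=> e ekl Vk' Vl' ekl' s s'.
have Pc : P.1 = (col k)%:R by apply: on_segment_fst_eq s; rewrite /= ekl.
have [PE|PE] :=
  on_unit_segment_nat (A := pt k') (c := col k') erefl (pt_fst_succ ekl') s' Pc.
- rewrite PE in s *.
  by case: (vertical_edge_point e ekl Vk' s) => ->; split; by [left|right].
- rewrite PE in s *.
  by case: (vertical_edge_point e ekl Vl' s) => ->; split; by [left|right].
Qed.

Lemma strip_edges_ordered k l k' l' : gap_edge k l -> gap_edge k' l' ->
  col l = (col k).+1 -> col k' = col k -> col l' = col l ->
  (k <= k' /\ l <= l') \/ (k' <= k /\ l' <= l).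
Proof.
case=> Vk Vl _ _ g; case=> Vk' Vl' _ _ g' ekl ekk' ell'.
have g1 := gap_lower g Vk' ekk'.
have g2 := gap_lower (gap_sym g) Vl' ell'.
have g3 := gap_lower g' Vk (esym ekk').
have g4 := gap_lower (gap_sym g') Vl (esym ell').
have kl' : k != l' by apply/eqP => e; move: ell'; rewrite -e ekl; lia.
have lk' : l != k' by apply/eqP => e; move: ekk'; rewrite -e ekl; lia.
lia.
Qed.

Lemma same_strip_crossing k l k' l' P : gap_edge k l -> gap_edge k' l' ->
  col l = (col k).+1 -> col k' = col k -> col l' = col l -> ~ (k = k' /\ l = l') ->
  on_segment P (pt k) (pt l) -> on_segment P (pt k') (pt l') -> at_endpoints P k l k' l'.
Proof.
move=> e e' ekl ekk' ell' ne s s'.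
have ekl' : col l' = (col k').+1 by rewrite ell' ekl ekk'.
have kk'_R : (pt k').1 = (pt k).1 by rewrite /= ekk'.
have ll'_R : (pt l').1 = (pt l).1 by rewrite /= ell'.
have [[kk' ll']|[k'k l'l]] := strip_edges_ordered e e' ekl ekk' ell'.
- have : (P = pt k /\ P = pt k') \/ (P = pt l /\ P = pt l').
    apply: unit_strip_crossing kk'_R (pt_fst_succ ekl) ll'_R _ _ _ s s';
      rewrite /= ?ler_int ?ltr_int //; lia.
  by case=> [[? ?]|[? ?]]; split; by [left|right].
- have : (P = pt k' /\ P = pt k) \/ (P = pt l' /\ P = pt l).
    apply: unit_strip_crossing (esym kk'_R) (pt_fst_succ ekl') (esym ll'_R) _ _ _ s' s;
      rewrite /= ?ler_int ?ltr_int //; lia.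
  by case=> [[? ?]|[? ?]]; split; by [left|right].
Qed.

Lemma distinct_strips_crossing k l k' l' P :
  col l = (col k).+1 -> col l' = (col k').+1 -> col k != col k' ->
  on_segment P (pt k) (pt l) -> on_segment P (pt k') (pt l') -> at_endpoints P k l k' l'.
Proof.
move=> ekl ekl' nkk' s s'.
have strip_bounds m n : col n = (col m).+1 -> on_segment P (pt m) (pt n) ->
    (col m)%:R <= P.1 <= (col m).+1%:R.
  by move=> emn /(on_segment_fst_bounds _); rewrite /= emn; apply; rewrite ler_nat.
have /andP[a1 a2] := strip_bounds _ _ ekl s.
have /andP[b1 b2] := strip_bounds _ _ ekl' s'.
have [n Pn] : exists n : nat, P.1 = n%:R.
  have [lt|lt] : (col k < col k')%N \/ (col k' < col k)%N by lia.
  - exists (col k'); apply/eqP; rewrite eq_le b1 andbT.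
    by apply: le_trans a2 _; rewrite ler_nat.
  - exists (col k); apply/eqP; rewrite eq_le a1 andbT.
    by apply: le_trans b2 _; rewrite ler_nat.
have [?|?] := on_unit_segment_nat (A := pt k) (c := col k) erefl (pt_fst_succ ekl) s Pn;
have [?|?] := on_unit_segment_nat (A := pt k') (c := col k') erefl (pt_fst_succ ekl') s' Pn;
by split; by [left|right].
Qed.

Theorem gap_edges_meet_at_endpoints k l k' l' P : gap_edge k l -> gap_edge k' l' ->
  ~ ((k = k' /\ l = l') \/ (k = l' /\ l = k')) ->
  on_segment P (pt k) (pt l) -> on_segment P (pt k') (pt l') -> at_endpoints P k l k' l'.
Proof.
wlog ckl : k l / (col k <= col l)%N.
  move=> hw; have [/hw//|/ltnW clk] := leqP (col k) (col l).
  move=> /gap_edge_sym e e' ne /on_segment_sym s s'.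
  have [] := hw l k clk e e' _ s s'; rewrite /at_endpoints; tauto.
wlog ckl' : k' l' / (col k' <= col l')%N.
  move=> hw; have [/hw//|/ltnW clk'] := leqP (col k') (col l').
  move=> e /gap_edge_sym e' ne s /on_segment_sym s'.
  have [] := hw l' k' clk' e e' _ s s'; rewrite /at_endpoints; tauto.
move=> e e' ne s s'.
have [ekl|ekl] : col l = col k \/ col l = (col k).+1 by case: e; lia.
  have [ekl'|ekl'] : col l' = col k' \/ col l' = (col k').+1 by case: e'; lia.
    exact: vertical_edges_crossing.
  by case: e' => *; apply: vertical_strip_crossing.
have [ekl'|ekl'] : col l' = col k' \/ col l' = (col k').+1 by case: e'; lia.
  by have [] : at_endpoints P k' l' k l by case: e => *; apply: vertical_strip_crossing.
have [ekk'|nkk'] := eqVneq (col k') (col k).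
  by apply: same_strip_crossing => //; [congruence|tauto].
by apply: distinct_strips_crossing; rewrite // eq_sym.
Qed.

End Drawing.

Local Notation string_of i k := (absz (ix i k)).

Lemma head_filter_iota_le (p : pred int) (d : int) (a n m : nat) :
  (a <= m < a + n)%N -> p m%:Z ->
  head d [seq x <- [seq j%:Z | j <- iota a n] | p x] <= m%:Z.
Proof.
elim: n a => [|n IH] a /=; first lia.
move=> am pm; case: ifP => pa /=; first lia.
have ne_am : a != m by apply/eqP => e; rewrite e pm in pa.
apply: IH => //; lia.
Qed.

Lemma kplus_le i k m : 0 < m <= (size i)%:Z -> k < m -> string_of i m = string_of i k ->
  kplus i k <= m.
Proof.
case: m => [n|n] //= /andP[n0 ns] km e.
apply: (@head_filter_iota_le _ _ 1 (size i) n); first lia.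
by rewrite /= km; apply/eqP.
Qed.

Lemma qedge_le_kplus r a i k l : qedge r a i k l -> l <= kplus i k.
Proof.
case/andP=> _ /orP[/andP[_ /eqP ->]//|].
by case/andP=> _ /orP[/andP[/andP[lk _] _]|/andP[/andP[ll lk] _]]; lia.
Qed.

Lemma qedge_string_gap r a i k l m : qedge r a i k l -> isV r i m -> k < m < l ->
  string_of i m != string_of i k.
Proof.
move=> q Vm /andP[km ml]; have lk := qedge_le_kplus q.
have [mneg|mpos] := ltP m 0.
  by rewrite /ix mneg (lt_trans km mneg); lia.
apply/eqP => e; have := kplus_le (m := m) (i := i) _ km e.
by move: Vm; rewrite /isV; lia.
Qed.

Lemma in_sheet_sym i br k l : in_sheet i br k l = in_sheet i br l k.
Proof.
rewrite /in_sheet /=; congr orb; first by rewrite eq_sym; case: eqP => // ->.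
by apply: eq_has => j /=; rewrite orbC.
Qed.

Lemma index_inj_mem (T : eqType) (s : seq T) x y :
  x \in s -> index y s = index x s -> y = x.
Proof.
move=> xs e; have ys : y \in s by rewrite -index_mem e index_mem.
exact: (index_inj x ys xs e).
Qed.

Lemma in_sheet_columns i br k l : uniq br -> in_sheet i br k l ->
  [/\ string_of i k \in br, string_of i l \in br,
      (index (string_of i k) br <= (index (string_of i l) br).+1)%N &
      (index (string_of i l) br <= (index (string_of i k) br).+1)%N].
Proof.
move=> ub /orP[/andP[/eqP <- kb]|/hasP[j]]; first by split.
rewrite mem_iota => /andP[_ hj].
have j1b : (j.+1 < size br)%N by move: hj; case: (size br) => //= n; lia.
have jb := ltnW j1b.
by case/orP=> /andP[/eqP -> /eqP ->]; rewrite !mem_nth ?index_uniq //; split=> //; lia.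
Qed.

Lemma sheet_qedge_gap_edge r a i br k l : uniq br -> qedge r a i k l ->
  in_sheet i br k l -> gap_edge (fun m => index (string_of i m) br) (isV r i) k l.
Proof.
move=> ub q sh; have [kb _ ckl clk] := in_sheet_columns ub sh.
have /andP[/andP[/andP[/andP[kl Vk] Vl] _] _] := q.
split=> // m Vm; split=> [kml|lmk]; last by move: lmk; lia.
by apply: contra_neq (qedge_string_gap q Vm kml) => /(index_inj_mem kb).
Qed.

Lemma sheet_arrow_gap_edge r a i br k l : uniq br -> qarrow r a i k l ->
  in_sheet i br k l -> gap_edge (fun m => index (string_of i m) br) (isV r i) k l.
Proof.
move=> ub /orP[/andP[q _]|/andP[q _]] sh; first exact: sheet_qedge_gap_edge ub q sh.
by apply/gap_edge_sym/(sheet_qedge_gap_edge ub q); rewrite in_sheet_sym.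
Qed.

Unset Implicit Arguments.

Theorem mainTheorem2 (r : nat) (a : nat -> nat -> int) (i : seq int)
    (br : seq nat) (R : realFieldType) (k l k' l' : int) (P : R * R) :
  GCM r a ->
  all (fun x => in_range r `|x|%N) i ->
  reduced_word r a (uword i) ->
  reduced_word r a (vword i) ->
  is_branch r a br ->
  qarrow r a i k l -> qarrow r a i k' l' ->
  in_sheet i br k l -> in_sheet i br k' l' ->
  ~ ((k = k' /\ l = l') \/ (k = l' /\ l = k')) ->
  on_segment P (vpt R i br k) (vpt R i br l) ->
  on_segment P (vpt R i br k') (vpt R i br l') ->
  (P = vpt R i br k \/ P = vpt R i br l) /\
  (P = vpt R i br k' \/ P = vpt R i br l').
Proof.
move=> _ _ _ _ [[_ ub _ _ _] _] q q' sh sh' ne.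
exact: gap_edges_meet_at_endpoints
  (sheet_arrow_gap_edge ub q sh) (sheet_arrow_gap_edge ub q' sh') ne.
Qed.
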